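(* Under the standing assumptions below, if $\mathcal P_1,\mathcal P_2$ are finite partitions of $\lambda$ with $\mathcal P_1\prec\mathcal P_2$, then $I(\mathcal P_1)\subseteq I(\mathcal P_2)$.
   Context: Standing assumptions: $G$ is a finite graph with at least one edge which is trivially power-colorable (for every positive integer $n$, every $\chi(G)$-coloring of $G^n$ is of the form $v\mapsto\phi(v_i)$ for some coordinate $i$ and proper coloring $\phi$ of $G$), $k=\chi(G)$, $\lambda$ is an infinite cardinal, and $\Phi$ is a fixed proper $k$-coloring of $G^\lambda$ (vertex set $V(G)^\lambda$, $(v_\xi)$ adjacent to $(w_\xi)$ iff $v_\xi w_\xi\in E(G)$ for all $\xi<\lambda$). A finite partition of $\lambda$ is a partition of $\lambda$ into finitely many nonempty pieces. For a finite partition $\mathcal P$, $V_{\mathcal P}=\{\mathbf v\in V(G^\lambda): \mathbf v\restriction A \text{ is constant for each } A\in\mathcal P\}$, and for $\mathbf v\in V_{\mathcal P}$, $A\in\mathcal P$, $\mathbf v_A\in V(G)$ is the constant value of $\mathbf v$ on $A$. If $\mathcal P=\{A_1,\dots,A_n\}$, the induced subgraph on $V_{\mathcal P}$ is isomorphic to $G^n$ via $\mathbf v\mapsto(\mathbf v_{A_1},\dots,\mathbf v_{A_n})$, so there are $i$ and a proper coloring $\phi$ of $G$ with $\Phi(\mathbf v)=\phi(\mathbf v_{A_i})$ for all $\mathbf v\in V_{\mathcal P}$; since $G$ has an edge, the block $A_i$ is uniquely determined, and it is denoted $I(\mathcal P)$. $\mathcal P_1\prec\mathcal P_2$ ($\mathcal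 P_1$ refines $\mathcal P_2$) means every $A\in\mathcal P_1$ is contained in some $B\in\mathcal P_2$. *)

From mathcomp Require Import all_boot.
Set Implicit Arguments. Unset Strict Implicit. Unset Printing Implicit Defensive.

Definition simple_graph (V : finType) (E : rel V) : Prop :=
  (forall a b, E a b = E b a) /\ (forall a, ~~ E a a).

Definition has_edge (V : finType) (E : rel V) : Prop := exists a b, E a b.

Definition proper_coloring (W : Type) (adj : W -> W -> Prop) (m : nat)
  (c : W -> 'I_m) : Prop := forall x y, adj x y -> c x <> c y.

Definition adjG (V : finType) (E : rel V) : V -> V -> Prop := fun a b => E a b.

(* Adjacency of the categorical (tensor) power G^I, vertices I -> V. *)
Definition adj_pow (V : finType) (E : rel V) (I : Type) :
  (I -> V) -> (I -> V) -> Prop := fun v w => forall i, E (v i) (w i).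

Definition is_chromatic_number (V : finType) (E : rel V) (k : nat) : Prop :=
  (exists c : V -> 'I_k, proper_coloring (adjG E) c) /\
  (forall m, (exists c : V -> 'I_m, proper_coloring (adjG E) c) -> k <= m).

Definition trivially_power_colorable (V : finType) (E : rel V) (k : nat) : Prop :=
  forall n : nat, 0 < n ->
  forall c : ('I_n -> V) -> 'I_k, proper_coloring (@adj_pow V E 'I_n) c ->
  exists (i : 'I_n) (phi : V -> 'I_k),
    proper_coloring (adjG E) phi /\ forall v, c v = phi (v i).

(* L (a type whose cardinality is lambda) is infinite. *)
Definition finite_type (L : Type) : Prop :=
  exists n (f : 'I_n -> L), forall x, exists i, f i = x.
Definition infinite_type (L : Type) : Prop := ~ finite_type L.

(* A finite partition of L into n nonempty pieces, given by the block map p;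
   block i is p^{-1}(i). *)
Definition finite_partition (L : Type) (n : nat) (p : L -> 'I_n) : Prop :=
  forall i, exists x, p x = i.

Definition refines (L : Type) (n1 n2 : nat) (p1 : L -> 'I_n1) (p2 : L -> 'I_n2)
  : Prop := forall i1, exists i2, forall x, p1 x = i1 -> p2 x = i2.

Definition in_VP (L : Type) (V : Type) (n : nat) (p : L -> 'I_n) (v : L -> V)
  : Prop := forall x y, p x = p y -> v x = v y.

(* Block i of P is I(P): Phi(v) = phi(v_{A_i}) on V_P for a proper colouring phi. *)
Definition is_I_block (V : finType) (E : rel V) (k : nat) (L : Type)
  (Phi : (L -> V) -> 'I_k) (n : nat) (p : L -> 'I_n) (i : 'I_n) : Prop :=
  exists phi : V -> 'I_k, proper_coloring (adjG E) phi /\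
    forall v : L -> V, in_VP p v -> forall x, p x = i -> Phi v = phi (v x).

(* Suppose x lies in I(P1) but its P2-block B is not I(P2), and pick an edge ab
   and a point y of I(P2). The vector v equal to b on B and to a elsewhere is
   constant on the blocks of P2, hence on those of the finer P1. Read through
   I(P1) at x, Phi v is the colour of the constant vector b; read through I(P2)
   at y, where v is a and that vector is b, the two colours differ. *)
From mathcomp Require Import all_boot.

Set Implicit Arguments.
Unset Strict Implicit.
Unset Printing Implicit Defensive.

Lemma refines_block_eq (L : Type) (n1 n2 : nat) (p1 : L -> 'I_n1)
    (p2 : L -> 'I_n2) (u w : L) :
  refines p1 p2 -> p1 u = p1 w -> p2 u = p2 w.
Proof.
move=> ref e; have [i2 Hi] := ref (p1 u).
by rewrite (Hi u erefl) (Hi w (esym e)).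
Qed.

Lemma in_VP_refines (L V : Type) (n1 n2 : nat) (p1 : L -> 'I_n1)
    (p2 : L -> 'I_n2) (v : L -> V) :
  refines p1 p2 -> in_VP p2 v -> in_VP p1 v.
Proof. by move=> ref v2 u w /(refines_block_eq ref) /v2. Qed.

Lemma in_VP_const {L V : Type} {n : nat} {p : L -> 'I_n} {a : V} :
  in_VP p (fun _ => a).
Proof. by []. Qed.

Section IBlock.

Variables (V : finType) (E : rel V) (k : nat) (L : Type).
Variable Phi : (L -> V) -> 'I_k.
Variables (n : nat) (p : L -> 'I_n) (i : 'I_n).
Hypothesis Ii : is_I_block E Phi p i.

Lemma I_block_colour_eq (v w : L -> V) (x : L) :
  in_VP p v -> in_VP p w -> p x = i -> v x = w x -> Phi v = Phi w.
Proof.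
by case: Ii => phi [_ H] vP wP px exw; rewrite (H _ vP _ px) (H _ wP _ px) exw.
Qed.

Lemma I_block_colour_neq (v w : L -> V) (x : L) :
  in_VP p v -> in_VP p w -> p x = i -> E (v x) (w x) -> Phi v <> Phi w.
Proof.
case: Ii => phi [phiP H] vP wP px Evw.
by rewrite (H _ vP _ px) (H _ wP _ px); apply: phiP.
Qed.

End IBlock.

Theorem mainTheorem16 (V : finType) (E : rel V) (k : nat) (L : Type)
  (Phi : (L -> V) -> 'I_k) :
  simple_graph E -> has_edge E ->
  is_chromatic_number E k ->
  trivially_power_colorable E k ->
  infinite_type L ->
  proper_coloring (@adj_pow V E L) Phi ->
  forall (n1 n2 : nat) (p1 : L -> 'I_n1) (p2 : L -> 'I_n2),
    finite_partition p1 -> finite_partition p2 -> refines p1 p2 ->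
  forall (i1 : 'I_n1) (i2 : 'I_n2),
    is_I_block E Phi p1 i1 -> is_I_block E Phi p2 i2 ->
    forall x : L, p1 x = i1 -> p2 x = i2.
Proof.
move=> _ [a [b Eab]] _ _ _ _ n1 n2 p1 p2 _ fp2 ref i1 i2 I1 I2 x px.
have [y py] := fp2 i2.
have [//|ne_x_y] := eqVneq (p2 x) i2.
pose v z := if p2 z == p2 x then b else a.
have vP2 : in_VP p2 v by move=> u w e; rewrite /v e.
have vP1 : in_VP p1 v := in_VP_refines ref vP2.
have Phi_v : Phi v = Phi (fun _ => b).
  by apply: (I_block_colour_eq I1 vP1 in_VP_const px); rewrite /v eqxx.
case: (I_block_colour_neq I2 vP2 in_VP_const py _ Phi_v).
by rewrite /v py eq_sym (negbTE ne_x_y).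
Qed.
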